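(* There is no $8$-divisible set of points of cardinality $52$ in $\mathrm{PG}(v-1,2)$, for any $v\ge1$.
   Context: $\mathrm{PG}(v-1,2)$ is the set of $1$-dimensional subspaces (points) of $\mathbb{F}_2^v$; hyperplanes are the $(v-1)$-dimensional subspaces. A set $\mathcal{C}$ of points is $\Delta$-divisible if there is an integer $u$ with $|\mathcal{C}\cap H|\equiv u\pmod{\Delta}$ for every hyperplane $H$, where $\mathcal{C}\cap H$ is the set of points of $\mathcal{C}$ contained in $H$. *)

From HB Require Import structures.
From mathcomp Require Import all_boot all_order all_algebra.
Set Implicit Arguments. Unset Strict Implicit. Unset Printing Implicit Defensive.
Import GRing.Theory.

(* Ambient space F_2^v = row vectors 'rV['F_2]_v.
   A point of PG(v-1,2) (a 1-dimensional subspace of F_2^v) is identified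
   with its unique nonzero vector. *)
Definition is_point (v : nat) (x : 'rV['F_2]_v) : bool := x != 0%R.

Definition point_set (v : nat) (C : {set 'rV['F_2]_v}) : Prop :=
  forall x, x \in C -> is_point x.

(* A hyperplane is a (v-1)-dimensional subspace of F_2^v, represented by a
   square matrix whose row space is that subspace. *)
Definition is_hyperplane (v : nat) (H : 'M['F_2]_v) : Prop := \rank H = v.-1.

Definition meet_hyp (v : nat) (C : {set 'rV['F_2]_v}) (H : 'M['F_2]_v)
  : {set 'rV['F_2]_v} := [set x in C | (x <= H)%MS].

Definition divisible (v : nat) (Delta : nat) (C : {set 'rV['F_2]_v}) : Prop :=
  exists u : nat, forall H : 'M['F_2]_v, is_hyperplane H ->
    #|meet_hyp C H| = u %[mod Delta].

Set Warnings "-notation-overridden,-ambiguous-paths".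
From mathcomp Require Import all_boot all_order all_algebra.
From mathcomp Require Import zify ring.
Set Implicit Arguments. Unset Strict Implicit. Unset Printing Implicit Defensive.
Import Order.TTheory GRing.Theory Num.Theory.
Local Open Scope ring_scope.

(* For a in F_2^v put s(a) = \sum_(x in C) (-1)^(x a) = 2 |C /\ ker a| - |C|.
   The k-th moment \sum_a s(a)^k is 2^v times the number of k-tuples of points of
   C summing to 0, so \sum_a s(a) = 0, \sum_a s(a)^2 = 2^v |C| and
   \sum_a s(a)^3 >= 0.  As 2^v >= |C| = 52, 8 divides 2^(v-1), and then
   8-divisibility forces |C /\ ker a| = |C| = 4 (mod 8) for every a, so s(a) lies in
   {-44, -28, ..., 36, 52}, where (s + 12) (s - 4) (s - 52) <= 0.  But by the three
   moments this cubic sums to at least 208 * 2^v > 0 over all a. *)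

Lemma F2_case (e : 'F_2) : e = 0 \/ e = 1.
Proof. by case: e => -[|[|//]] lt; [left | right]; apply/val_inj. Qed.

Lemma oppr_F2mx m n (A : 'M['F_2]_(m, n)) : - A = A.
Proof. by rewrite -scaleN1r oppr_pchar2 ?pchar_Fp // scale1r. Qed.

Lemma meet_hyp_sub v (C : {set 'rV['F_2]_v}) H : meet_hyp C H \subset C.
Proof. by apply/subsetP => x; rewrite inE => /andP[]. Qed.

Section Characters.
Variable v : nat.
Implicit Types (x y : 'rV['F_2]_v) (a b : 'cV['F_2]_v).

Definition dot x a : 'F_2 := (x *m a) 0 0.

Definition chi x a : int := (-1) ^+ dot x a.

Lemma signF2D (e f : 'F_2) : (-1) ^+ (e + f)%R = (-1) ^+ e * (-1) ^+ f :> int.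
Proof. by case: (F2_case e) => ->; case: (F2_case f) => ->. Qed.

Lemma chiDl x y a : chi (x + y) a = chi x a * chi y a.
Proof. by rewrite /chi /dot mulmxDl mxE signF2D. Qed.

Lemma chiDr x a b : chi x (a + b) = chi x a * chi x b.
Proof. by rewrite /chi /dot mulmxDr mxE signF2D. Qed.

Lemma chi0l a : chi 0 a = 1.
Proof. by rewrite /chi /dot mul0mx mxE. Qed.

Lemma chiE x a : chi x a = if (x <= kermx a)%MS then 1 else -1.
Proof.
rewrite sub_kermx /chi /dot.
have -> : (x *m a == 0) = ((x *m a) 0 0 == 0).
  by apply/eqP/eqP => [->|xa0]; [rewrite mxE | apply/matrixP => i j; rewrite !ord1 xa0 mxE].
by case: (F2_case ((x *m a) 0 0)) => ->.
Qed.

Lemma chi_sum (I : finType) (f : I -> 'rV['F_2]_v) a :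
  chi (\sum_i f i) a = \prod_i chi (f i) a.
Proof. exact: (big_morph (chi^~ a) (fun x y => chiDl x y a) (chi0l a)). Qed.

Lemma card_cV : #|{: 'cV['F_2]_v}| = (2 ^ v)%N.
Proof. by rewrite card_mx card_Fp // muln1. Qed.

Lemma sum_chi x : \sum_a chi x a = if x == 0 then (2 ^ v)%:Z else 0.
Proof.
have [->|x_neq0] := eqVneq x 0.
  rewrite (eq_bigr (fun=> 1)) => [|a _]; last exact: chi0l.
  by rewrite sumr_const card_cV natz.
have [i xi_neq0] : exists i, x 0 i != 0.
  apply/existsP; apply: contraR x_neq0 => /existsPn x0.
  by apply/eqP/matrixP => r j; rewrite ord1 mxE; apply/eqP/negPn.
have chi_delta : chi x (delta_mx i 0) = -1.
  rewrite /chi /dot -colE mxE.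
  by case: (F2_case (x 0 i)) xi_neq0 => ->.
have shift : \sum_a chi x a = \sum_a chi x (a + delta_mx i 0).
  exact: (reindex_inj (addIr _)).
have : \sum_a chi x a = - \sum_a chi x a.
  rewrite {1}shift -sumrN.
  by apply: eq_bigr => a _; rewrite chiDr chi_delta mulrN1.
by move/eqP; rewrite -addr_eq0 -mulr2n mulrn_eq0 => /eqP.
Qed.

End Characters.

Section Moments.
Variables (v : nat) (C : {set 'rV['F_2]_v}).
Implicit Types (a : 'cV['F_2]_v) (k : nat).

Definition charsum a : int := \sum_(x in C) chi x a.

Definition zero_sums k : {set {ffun 'I_k -> 'rV['F_2]_v}} :=
  [set f in ffun_on C | \sum_i f i == 0].

Lemma charsum_exp a k :
  charsum a ^+ k =
  \sum_(f : {ffun 'I_k -> 'rV['F_2]_v} | f \in ffun_on C) chi (\sum_i f i) a.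
Proof.
have -> : charsum a ^+ k = \prod_(i < k) charsum a by rewrite prodr_const card_ord.
by rewrite bigA_distr_big; apply: eq_bigr => f _; rewrite chi_sum.
Qed.

Lemma charsum_moment k : \sum_a charsum a ^+ k = (2 ^ v * #|zero_sums k|)%N%:Z.
Proof.
under eq_bigr do rewrite charsum_exp.
rewrite exchange_big /=.
under eq_bigr do rewrite sum_chi.
rewrite -big_mkcondr sumr_const -mulr_natr natz -PoszM.
by congr (Posz (_ * _)); apply: eq_card => f; rewrite inE.
Qed.

Lemma zero_sums1 : point_set C -> zero_sums 1 = set0.
Proof.
move=> Cpts; apply/setP => f; rewrite !inE big_ord1.
apply/negP => /andP[/ffun_onP/(_ ord0) f0C /eqP f0].
by move: (Cpts _ f0C); rewrite f0 /is_point eqxx.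
Qed.

Lemma card_zero_sums2 : #|zero_sums 2| = #|C|.
Proof.
have const_inj : injective (fun x : 'rV['F_2]_v => [ffun=> x] : {ffun 'I_2 -> _}).
  by move=> x y /ffunP/(_ ord0); rewrite !ffunE.
rewrite -(card_imset _ const_inj); apply: eq_card => f.
rewrite inE big_ord_recl big_ord1 addr_eq0 oppr_F2mx.
apply/andP/imsetP => [[/ffun_onP fC /eqP f01] | [x xC ->]].
  exists (f ord0); first exact: fC.
  apply/ffunP => i; rewrite ffunE.
  by case: (unliftP ord0 i) => [j ->|-> //]; rewrite ord1 f01.
by split; [apply/ffun_onP => i | ]; rewrite !ffunE.
Qed.

Lemma charsum_meet a :
  charsum a = 2 * #|meet_hyp C (kermx a)|%:Z - #|C|%:Z.
Proof.
set M := meet_hyp C (kermx a).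
have MC : M \subset C := meet_hyp_sub C _.
rewrite /charsum (big_setID M) /= (setIidPr MC).
rewrite (eq_bigr (fun=> 1)) => [|x]; last by rewrite inE chiE => /andP[_ ->].
rewrite [X in _ + X](eq_bigr (fun=> -1)) => [|x]; last first.
  by rewrite !inE chiE => /andP[/nandP[/negP//|/negbTE ->]].
rewrite !sumr_const -(cardsID M C) (setIidPr MC) -[in X in _ + X]mulr_natr !natz PoszD; ring.
Qed.

Lemma sum_charsum : point_set C -> \sum_a charsum a = 0.
Proof.
move=> Cpts; have := charsum_moment 1; rewrite zero_sums1 // cards0 muln0.
by under eq_bigr do rewrite expr1.
Qed.

Lemma sum_charsum_sqr : \sum_a charsum a ^+ 2 = (2 ^ v * #|C|)%N%:Z.
Proof. by rewrite charsum_moment card_zero_sums2. Qed.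

Lemma sum_meet_kermx : point_set C ->
  (2 * \sum_(a : 'cV_v) #|meet_hyp C (kermx a)| = #|C| * 2 ^ v)%N.
Proof.
move/sum_charsum; under eq_bigr do rewrite charsum_meet.
rewrite sumrB -mulr_sumr sumr_const card_cV -(big_morph Posz PoszD (erefl (Posz 0))).
rewrite -PoszM => /eqP; rewrite subr_eq0 => /eqP.
by rewrite -mulr_natr natz -PoszM => -[].
Qed.

Lemma sum_charsum_cubic_ge (p q r : int) : point_set C ->
  (2 ^ v)%:Z * (- (p + q + r) * #|C|%:Z - p * q * r) <=
  \sum_a (charsum a - p) * (charsum a - q) * (charsum a - r).
Proof.
move=> Cpts.
have expand s : (s - p) * (s - q) * (s - r) =
    s ^+ 3 - (p + q + r) * s ^+ 2 + (p * q + q * r + r * p) * s - p * q * r.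
  by ring.
under eq_bigr do rewrite expand.
rewrite !big_split /= sumrN -!mulr_sumr sum_charsum // sum_charsum_sqr sumr_const card_cV.
rewrite charsum_moment mulr0 addr0 -mulr_natr !PoszM natz.
rewrite -subr_ge0 (_ : _ - _ = (2 ^ v)%N%:Z * #|zero_sums 3|%:Z) //; ring.
Qed.

End Moments.

Local Close Scope ring_scope.

Lemma kermx_hyperplane v (a : 'cV['F_2]_v) : a != 0%R -> is_hyperplane (kermx a).
Proof.
move=> a_neq0; rewrite /is_hyperplane mxrank_ker.
suff -> : \rank a = 1%N by rewrite subn1.
by apply/eqP; rewrite eqn_leq rank_leq_col lt0n mxrank_eq0.
Qed.

Lemma meet_kermx0 v (C : {set 'rV['F_2]_v}) : meet_hyp C (kermx (0 : 'cV_v)%R) = C.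
Proof. by apply/setP => x; rewrite inE sub_kermx mulmx0 eqxx andbT. Qed.

Lemma divisible_meet_card v (Delta : nat) (C : {set 'rV['F_2]_v}) :
  0 < v -> Delta %| 2 ^ v.-1 -> point_set C -> divisible Delta C ->
  forall a : 'cV_v, #|meet_hyp C (kermx a)| = #|C| %[mod Delta].
Proof.
(* The counts over all a add up to |C| 2^(v-1) = 0, while the terms a != 0
   contribute (2^v - 1) u = -u (mod Delta). *)
move=> v_gt0 dvd_half Cpts [u Cu].
have meet_u (a : 'cV_v) : a != 0%R -> #|meet_hyp C (kermx a)| = u %[mod Delta].
  by move=> a_neq0; apply/Cu/kermx_hyperplane.
suff u_C : u = #|C| %[mod Delta].
  by move=> a; have [->|/meet_u ->] := eqVneq a 0%R; rewrite ?meet_kermx0.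
have pow_half : 2 ^ v = 2 * 2 ^ v.-1 by rewrite -expnS prednK.
have dvd_full : Delta %| 2 ^ v by rewrite pow_half dvdn_mull.
have sum_eq0 : \sum_(a : 'cV_v) #|meet_hyp C (kermx a)| = 0 %[mod Delta].
  have := sum_meet_kermx Cpts; rewrite pow_half mulnCA => /eqP.
  rewrite eqn_mul2l /= => /eqP ->.
  by apply/eqP; rewrite eqn_mod_dvd // subn0 dvdn_mull.
have sum_split :
    \sum_(a : 'cV_v) #|meet_hyp C (kermx a)| = #|C| + (2 ^ v).-1 * u %[mod Delta].
  rewrite (bigD1 0%R) //= meet_kermx0 -modnDmr -modn_summ.
  rewrite (eq_bigr (fun=> u %% Delta)) => [|a /meet_u ->//].
  by rewrite sum_nat_const cardC1 card_cV modnMmr modnDmr.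
have [k pow_k] := dvdnP dvd_full.
have u_sum : u = \sum_(a : 'cV_v) #|meet_hyp C (kermx a)| + u %[mod Delta].
  by rewrite -modnDml sum_eq0 mod0n.
rewrite u_sum -modnDml sum_split modnDml -addnA -mulSnr prednK ?expn_gt0 //.
by rewrite pow_k addnC mulnAC modnMDl.
Qed.

Lemma cubic_weight_le0 (m : nat) : m = 4 %[mod 8] -> m <= 52 ->
  ((2 * m%:Z - 52 - 4) * (2 * m%:Z - 52 - 52) * (2 * m%:Z - 52 + 12) <= 0)%R.
Proof.
move=> m_mod m_le; rewrite (divn_eq m 8) m_mod.
have : m %/ 8 <= 6 by lia.
by case: (m %/ 8) => [|[|[|[|[|[|[|//]]]]]]].
Qed.

Theorem lemma5p10 (v : nat) : 1 <= v ->
  forall C : {set 'rV['F_2]_v},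
    point_set C -> divisible 8 C -> #|C| <> 52.
Proof.
move=> v_gt0 C Cpts Cdiv C52.
have C_le : 52 <= 2 ^ v.
  by rewrite -C52; apply: leq_trans (max_card C) _; rewrite card_mx card_Fp // mul1n.
have dvd8 : 8 %| 2 ^ v.-1.
  rewrite (_ : 8 = 2 ^ 3) // dvdn_exp2l // -ltnS prednK //.
  by rewrite -(ltn_exp2l _ _ (_ : 1 < 2)) // (leq_trans _ C_le).
have meet_mod (a : 'cV_v) : #|meet_hyp C (kermx a)| = 4 %[mod 8].
  by rewrite (divisible_meet_card v_gt0 dvd8 Cpts Cdiv) C52.
have meet_le (a : 'cV_v) : #|meet_hyp C (kermx a)| <= 52.
  by rewrite -C52 subset_leq_card // meet_hyp_sub.
have lb := sum_charsum_cubic_ge 4 52 (-12) Cpts.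
have ub : (\sum_a (charsum C a - 4) * (charsum C a - 52) * (charsum C a - -12) <= 0)%R.
  apply: sumr_le0 => a _; rewrite charsum_meet C52 opprK.
  exact: cubic_weight_le0.
by have := le_trans lb ub; rewrite C52; lia.
Qed.
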